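(* Let $k$ be a field and $H\subsetneq\mathbb{N}$ a numerical semigroup with Frobenius number $f$, and let $R=k[[H]]\subseteq k[[t]]$. Then $R$ has minimal canonical conductor if and only if $f-1$ is a quasi-Frobenius number of $H$.
   Context: A numerical semigroup is an additive submonoid $H\subseteq\mathbb{N}$ with $\mathbb{N}\setminus H$ finite; its Frobenius number $f$ is the largest integer not in $H$. An integer $x\notin H$ is a quasi-Frobenius number of $H$ if $x+h\in H$ for all $h\in H$ with $h\neq 0$. $k[[H]]$ is the subring of the power series ring $k[[t]]$ consisting of power series $\sum c_h t^h$ supported on $H$; it is a one-dimensional analytically unramified local domain with integral closure $\overline{R}=k[[t]]$. A one-dimensional singular analytically unramified local domain $R$ with canonical ideal $\omega$ has minimal canonical conductor if $b(\omega)=\mathfrak{c}(R)$, where: $B(\omega)=\bigcup_{n\ge0}(\omega^n:\omega^n)$ with $\omega^n:\omega^n=\{x\in Q(R): x\omega^n\subseteq\omega^n\}$; $b(\omega)=\{x\in B(\omega): xB(\omega)\subseteq R\}$; and $\mathfrak{c}(R)=\{x\in\overline{R}: x\overline{R}\subseteq R\}$. Equivalently, $B(\omega)=\overline{R}$. *)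

From HB Require Import structures.
From mathcomp Require Import all_boot all_order all_algebra.
From mathcomp Require Import boolp classical_sets fsbigop.

Set Implicit Arguments.
Unset Strict Implicit.
Unset Printing Implicit Defensive.

Import Order.TTheory GRing.Theory Num.Theory.
Local Open Scope ring_scope.
Local Open Scope classical_set_scope.

Definition numerical_semigroup (H : nat -> Prop) : Prop :=
  H 0%N /\ (forall a b, H a -> H b -> H (a + b)%N) /\
  exists N : nat, forall n, (N <= n)%N -> H n.

Definition inHZ (H : nat -> Prop) (x : int) : Prop :=
  exists m : nat, x = m%:Z /\ H m.

Definition is_frobenius (H : nat -> Prop) (f : int) : Prop :=
  ~ inHZ H f /\ forall n : int, f < n -> inHZ H n.

Definition is_quasi_frobenius (H : nat -> Prop) (x : int) : Prop :=
  ~ inHZ H x /\ forall h : nat, H h -> h <> 0%N -> inHZ H (x + h%:Z).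

(* coefficient functions; a formal series sum_n x n t^n *)
Definition series (K : fieldType) := int -> K.

Definition is_laurent (K : fieldType) (x : series K) : Prop :=
  exists m : int, forall n, n < m -> x n = 0.

Definition ls0 (K : fieldType) : series K := fun _ => 0.
Definition lsadd (K : fieldType) (x y : series K) : series K :=
  fun n => x n + y n.
(* Cauchy product (the index set is finite for Laurent series) *)
Definition lsmul (K : fieldType) (x y : series K) : series K :=
  fun n => \sum_(i \in [set i : int | x i != 0 /\ y (n - i) != 0])
             (x i * y (n - i)).

(* k[[t]] (= the integral closure of k[[H]]) *)
Definition in_kt (K : fieldType) (x : series K) : Prop :=
  forall n : int, n < 0 -> x n = 0.

Definition in_kH (K : fieldType) (H : nat -> Prop) (x : series K) : Prop :=
  forall n : int, x n != 0 -> inHZ H n.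

(* Q(R), the total quotient ring of R, realized inside k((t)) *)
Definition in_QR (K : fieldType) (H : nat -> Prop) (x : series K) : Prop :=
  is_laurent x /\
  exists b : series K, in_kH H b /\ b <> ls0 K /\ in_kH H (lsmul b x).

Definition submodQ (K : fieldType) (H : nat -> Prop) (M : set (series K)) :=
  (M `<=` in_QR H) /\ M (ls0 K) /\
  (forall x y, M x -> M y -> M (lsadd x y)) /\
  (forall r x, in_kH H r -> M x -> M (lsmul r x)).

(* a fractional ideal: an R-submodule of Q(R) containing a regular (here:
   nonzero) element and with d M contained in R for some regular d in R *)
Definition frac_ideal (K : fieldType) (H : nat -> Prop) (M : set (series K)) :=
  submodQ H M /\ (exists x, M x /\ x <> ls0 K) /\
  (exists d, in_kH H d /\ d <> ls0 K /\ forall x, M x -> in_kH H (lsmul d x)).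

Definition colon (K : fieldType) (H : nat -> Prop) (I J : set (series K)) :
  set (series K) :=
  [set x | in_QR H x /\ forall y, J y -> I (lsmul x y)].

(* canonical ideal (Herzog--Kunz): fractional ideal w with w:(w:I) = I for
   every fractional ideal I *)
Definition canonical_ideal (K : fieldType) (H : nat -> Prop)
  (w : set (series K)) : Prop :=
  frac_ideal H w /\
  forall I, frac_ideal H I -> colon H w (colon H w I) = I.

Definition prodI (K : fieldType) (I J : set (series K)) : set (series K) :=
  [set x | exists s : seq (series K * series K),
     foldr (fun p (P : Prop) => (I p.1 /\ J p.2) /\ P) True s /\
     x = foldr (fun p acc => lsadd (lsmul p.1 p.2) acc) (ls0 K) s].

Fixpoint powI (K : fieldType) (H : nat -> Prop) (w : set (series K)) (n : nat)
  : set (series K) :=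
  match n with
  | 0%N => in_kH H
  | n'.+1 => prodI (powI H w n') w
  end.

Definition Bw (K : fieldType) (H : nat -> Prop) (w : set (series K)) :=
  [set x | exists n : nat, colon H (powI H w n) (powI H w n) x].

Definition bw (K : fieldType) (H : nat -> Prop) (w : set (series K)) :=
  [set x | Bw H w x /\ forall y, Bw H w y -> in_kH H (lsmul x y)].

Definition conductor (K : fieldType) (H : nat -> Prop) : set (series K) :=
  [set x | in_kt x /\ forall y, in_kt y -> in_kH H (lsmul x y)].

(* k[[H]] has minimal canonical conductor: b(w) = c(R) (for a canonical
   ideal w; the notion does not depend on the choice, so we quantify over
   all canonical ideals) *)
Definition min_canonical_conductor (K : fieldType) (H : nat -> Prop) : Prop :=
  forall w : set (series K), canonical_ideal H w -> bw H w = @conductor K H.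

(* Every canonical ideal [w] of [R = k[[H]]] is a unit multiple [x^-1 K] of
   the standard canonical ideal [K], spanned by the [t^n] with [f - n] not in
   [H]: [K] is canonical by linear duality on finitely many coefficients, and
   some product of an element of [K : w] with one of [w : K] has a nonzero
   constant term, hence is a unit of [R].  As [w^n = x^-n K^n] and [K] lies in
   [k[[t]]], so does [B(w)].  If [f - 1] is not in [H], then [t] lies in [K],
   so [x^-n t^i] lies in [w^n] for [i <= n]; since every power series is a
   polynomial of degree at most [f] plus an element of [K], this gives
   [w^f = x^-f k[[t]]], whence [B(w) = k[[t]]].  If [f - 1] is in [H], no
   element of any [K^n] involves [t], so [t^(f-1)] lies in [b(K)] although
   [t^(f-1) * t = t^f] is not in [R].  Finally, [f - 1] is quasi-Frobenius iff
   it is not in [H], because [1] is not in [H]. *)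

From mathcomp Require Import all_boot all_order all_algebra.
From mathcomp Require Import boolp classical_sets fsbigop.
From mathcomp Require Import zify.
Import Order.TTheory GRing.Theory Num.Theory.
Local Open Scope ring_scope.
Set Implicit Arguments.
Unset Strict Implicit.
Unset Printing Implicit Defensive.

Section LaurentSeries.
Variable K : fieldType.
Local Notation series := (series K).
Implicit Types (a b d e : series) (c : K).

Definition vanish_below a (m : int) := forall n, n < m -> a n = 0.

Lemma vanish_belowW a m m' : vanish_below a m -> m' <= m -> vanish_below a m'.
Proof. by move=> h le n hn; apply: h; lia. Qed.

Lemma vanish_below_supp a m i : vanish_below a m -> a i != 0 -> m <= i.
Proof. by move=> h; apply: contraNT; rewrite -ltNge => /h ->. Qed.

Lemma laurent_common_bound a b : is_laurent a -> is_laurent b ->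
  exists m, vanish_below a m /\ vanish_below b m.
Proof.
move=> [ma ha] [mb hb]; exists (Num.min ma mb).
by split; [apply: vanish_belowW ha _ | apply: vanish_belowW hb _];
  rewrite ge_min lexx ?orbT.
Qed.

Lemma lsmul_seqE a b n (s : seq int) : uniq s ->
  (forall i, a i != 0 -> b (n - i) != 0 -> i \in s) ->
  lsmul a b n = \sum_(i <- s) a i * b (n - i).
Proof.
move=> us cov; apply: fsbig_fwiden => //= [i [ai bi]|i [_ hP]]; first exact: cov.
rewrite /preimage /=; have [->|anz] := eqVneq (a i) 0; first by rewrite mul0r.
have [->|bnz] := eqVneq (b (n - i)) 0; first by rewrite mulr0.
by case: hP.
Qed.

Lemma lsmul_neq0 a b n : lsmul a b n != 0 ->
  exists i, a i != 0 /\ b (n - i) != 0.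
Proof.
move=> h; apply: contrapT => hn; move: h.
rewrite (@lsmul_seqE _ _ _ [::]) ?big_nil ?eqxx // => i ai bi.
by case: hn; exists i.
Qed.

Lemma vanish_below_mul a b ma mb : vanish_below a ma -> vanish_below b mb ->
  vanish_below (lsmul a b) (ma + mb).
Proof.
move=> ha hb n hn; apply/eqP; apply: contraT => /lsmul_neq0 [i [ai bi]].
by have := vanish_below_supp ha ai; have := vanish_below_supp hb bi; lia.
Qed.

Lemma lsmul_lead a b ma mb : vanish_below a ma -> vanish_below b mb ->
  lsmul a b (ma + mb) = a ma * b mb.
Proof.
move=> ha hb; rewrite (@lsmul_seqE _ _ _ [:: ma]) ?big_seq1 //.
  by have -> : ma + mb - ma = mb by lia.
move=> i ai bi; rewrite inE; apply/eqP.
by have := vanish_below_supp ha ai; have := vanish_below_supp hb bi; lia.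
Qed.

Lemma laurent_mul a b : is_laurent a -> is_laurent b -> is_laurent (lsmul a b).
Proof. by move=> [ma ha] [mb hb]; exists (ma + mb); exact: vanish_below_mul. Qed.

Lemma laurent_add a b : is_laurent a -> is_laurent b -> is_laurent (lsadd a b).
Proof.
move=> la lb; have [m [ha hb]] := laurent_common_bound la lb.
by exists m => n hn; rewrite /lsadd ha ?hb ?addr0.
Qed.

Lemma laurent0 : is_laurent (ls0 K).
Proof. by exists 0. Qed.

Definition window (lo : int) (L : nat) : seq int :=
  [seq lo + k%:Z | k <- iota 0 L].

Lemma mem_window lo L i : (i \in window lo L) = (lo <= i < lo + L%:Z).
Proof.
apply/mapP/andP => [[k]|[h1 h2]].
  by rewrite mem_iota => /andP[_ kL] ->; split; lia.
by exists `|i - lo|%N; [rewrite mem_iota|]; lia.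
Qed.

Lemma window_uniq lo L : uniq (window lo L).
Proof. by rewrite map_inj_uniq ?iota_uniq // => x y /addrI []. Qed.

Lemma lsmul_windowE a b ma mb n lo L : vanish_below a ma -> vanish_below b mb ->
  lo <= ma -> n - mb < lo + L%:Z ->
  lsmul a b n = \sum_(i <- window lo L) a i * b (n - i).
Proof.
move=> ha hb h1 h2; apply: lsmul_seqE; first exact: window_uniq.
move=> i ai bi; rewrite mem_window.
by have := vanish_below_supp ha ai; have := vanish_below_supp hb bi; lia.
Qed.

Lemma lsmulC a b : is_laurent a -> is_laurent b -> lsmul a b = lsmul b a.
Proof.
move=> la lb; have [m [ha hb]] := laurent_common_bound la lb.
apply: funext => n; pose L := (`|n| + 2 * `|m|).+1%N.
rewrite (@lsmul_windowE _ _ m m n m L) //; last by rewrite /L; lia.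
rewrite (@lsmul_seqE _ _ n [seq n - i | i <- window m L]).
- rewrite [in RHS]big_map; apply: eq_bigr => i _.
  by rewrite mulrC; have -> : n - (n - i) = i by lia.
- by rewrite map_inj_uniq ?window_uniq // => x y /addrI /oppr_inj.
- move=> j bj aj; apply/mapP; exists (n - j); last by lia.
  have := vanish_below_supp hb bj; have := vanish_below_supp ha aj.
  by rewrite mem_window /L; lia.
Qed.

Lemma lsmulA a b d : is_laurent a -> is_laurent b -> is_laurent d ->
  lsmul a (lsmul b d) = lsmul (lsmul a b) d.
Proof.
move=> [ma ha] [mb hb] [md hd]; apply: funext => n.
pose M : int := - (`|ma|%N + `|mb|%N + `|md|%N)%:Z.
have {}ha : vanish_below a M by apply: vanish_belowW ha _; lia.
have {}hb : vanish_below b M by apply: vanish_belowW hb _; lia.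
have {}hd : vanish_below d M by apply: vanish_belowW hd _; lia.
pose s := window (2 * M) (`|n| + 4 * `|M|).+1%N.
have us : uniq s by exact: window_uniq.
have inS i : 2 * M <= i -> i <= n - 2 * M -> i \in s.
  by move=> h1 h2; rewrite mem_window; lia.
have -> : lsmul a (lsmul b d) n =
    \sum_(j <- s) \sum_(i <- s) a j * (b (i - j) * d (n - i)).
  rewrite (@lsmul_seqE _ _ _ s) //; last first.
    move=> j aj bdj; have := vanish_below_supp ha aj.
    have := vanish_below_supp (vanish_below_mul hb hd) bdj; move=> *; apply: inS; lia.
  apply: eq_bigr => j _; rewrite -mulr_sumr.
  have [->|anz] := eqVneq (a j) 0; first by rewrite !mul0r.
  congr (_ * _); rewrite (@lsmul_seqE _ _ _ [seq i - j | i <- s]).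
  - by rewrite big_map; apply: eq_bigr => i _; have -> : n - j - (i - j) = n - i by lia.
  - by rewrite map_inj_uniq // => x y /addIr.
  - move=> k bk dk; apply/mapP; exists (k + j); last by rewrite addrK.
    have := vanish_below_supp hb bk; have := vanish_below_supp hd dk.
    have := vanish_below_supp ha anz; move=> *; apply: inS; lia.
have -> : lsmul (lsmul a b) d n =
    \sum_(i <- s) \sum_(j <- s) a j * (b (i - j) * d (n - i)).
  rewrite (@lsmul_seqE _ _ _ s) //; last first.
    move=> i abi di; have := vanish_below_supp (vanish_below_mul ha hb) abi.
    have := vanish_below_supp hd di; move=> *; apply: inS; lia.
  apply: eq_bigr => i _; under eq_bigr do rewrite mulrA.
  rewrite -mulr_suml; have [->|dnz] := eqVneq (d (n - i)) 0.
    by rewrite !mulr0.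
  congr (_ * _); apply: lsmul_seqE => // j aj bj.
  have := vanish_below_supp ha aj; have := vanish_below_supp hb bj.
  have := vanish_below_supp hd dnz; move=> *; apply: inS; lia.
exact: exchange_big.
Qed.

Lemma lsmulDr a b d : is_laurent a -> is_laurent b -> is_laurent d ->
  lsmul a (lsadd b d) = lsadd (lsmul a b) (lsmul a d).
Proof.
move=> [ma ha] [mb hb] [md hd]; apply: funext => n.
pose M : int := - (`|mb|%N + `|md|%N)%:Z.
have {}hb : vanish_below b M by apply: vanish_belowW hb _; lia.
have {}hd : vanish_below d M by apply: vanish_belowW hd _; lia.
have hbd : vanish_below (lsadd b d) M by move=> k hk; rewrite /lsadd hb ?hd ?addr0.
pose L := (`|n| + `|ma| + `|M|).+1%N.
rewrite /lsadd !(@lsmul_windowE a _ ma M n ma L) //; try by rewrite /L; lia.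
by rewrite -big_split; apply: eq_bigr => i _; rewrite mulrDr.
Qed.

Lemma lsmul0r a : lsmul a (ls0 K) = ls0 K.
Proof.
apply: funext => n; rewrite (@lsmul_seqE _ _ _ [::]) ?big_nil //.
by move=> i _; rewrite /ls0 eqxx.
Qed.

Lemma lsaddA a b d : lsadd a (lsadd b d) = lsadd (lsadd a b) d.
Proof. by apply: funext => n; rewrite /lsadd addrA. Qed.

Lemma lsadd0r a : lsadd a (ls0 K) = a.
Proof. by apply: funext => n; rewrite /lsadd /ls0 addr0. Qed.

Lemma lsadd0l a : lsadd (ls0 K) a = a.
Proof. by apply: funext => n; rewrite /lsadd /ls0 add0r. Qed.

Lemma lsmulCA a b d : is_laurent a -> is_laurent b -> is_laurent d ->
  lsmul a (lsmul b d) = lsmul b (lsmul a d).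
Proof. by move=> la lb ld; rewrite lsmulA // (lsmulC la lb) -lsmulA. Qed.

Lemma lsmulAC a b d : is_laurent a -> is_laurent b -> is_laurent d ->
  lsmul (lsmul a b) d = lsmul (lsmul a d) b.
Proof. by move=> la lb ld; rewrite -lsmulA // (lsmulC lb ld) lsmulA. Qed.

Lemma lsmulACA a b d e :
  is_laurent a -> is_laurent b -> is_laurent d -> is_laurent e ->
  lsmul (lsmul a b) (lsmul d e) = lsmul (lsmul a d) (lsmul b e).
Proof.
move=> la lb ld le; rewrite -(lsmulA la lb (laurent_mul ld le)) (lsmulCA lb ld le).
by rewrite (lsmulA la ld (laurent_mul lb le)).
Qed.

Definition lsmono c (m : int) : series := fun n => if n == m then c else 0.
Definition ls1 : series := lsmono 1 0.
Definition lsscale c a : series := fun n => c * a n.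

Lemma vanish_below_mono c m : vanish_below (lsmono c m) m.
Proof. by move=> n hn; rewrite /lsmono ifF //; apply/eqP; lia. Qed.

Lemma laurent_mono c m : is_laurent (lsmono c m).
Proof. by exists m; exact: vanish_below_mono. Qed.

Lemma lsmono_neq0 c m : c != 0 -> lsmono c m <> ls0 K.
Proof. by move=> c0 /(congr1 (fun a => a m)); rewrite /lsmono /ls0 eqxx; apply/eqP. Qed.

Lemma ls1_neq0 : ls1 <> ls0 K.
Proof. exact: lsmono_neq0 (oner_neq0 K). Qed.

Lemma lsmul_monol c m a n : lsmul (lsmono c m) a n = c * a (n - m).
Proof.
rewrite (@lsmul_seqE _ _ _ [:: m]) ?big_seq1 /lsmono ?eqxx // => i.
by case: (i =P m) => [-> _ _|_]; rewrite ?inE ?eqxx.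
Qed.

Lemma lsmono1M (m n : int) : lsmul (lsmono 1 m) (lsmono 1 n) = lsmono 1 (m + n).
Proof.
apply: funext => k; rewrite lsmul_monol mul1r /lsmono.
by have -> : (k - m == n) = (k == m + n) by apply/eqP/eqP; lia.
Qed.

Lemma lsmul1 a : lsmul ls1 a = a.
Proof. by apply: funext => n; rewrite lsmul_monol mul1r subr0. Qed.

Lemma lsmulr1 a : is_laurent a -> lsmul a ls1 = a.
Proof. by move=> la; rewrite lsmulC ?lsmul1 //; exact: laurent_mono. Qed.

Lemma lsscaleE c a : lsscale c a = lsmul (lsmono c 0) a.
Proof. by apply: funext => n; rewrite lsmul_monol subr0. Qed.

Lemma laurent_scale c a : is_laurent a -> is_laurent (lsscale c a).
Proof. by rewrite lsscaleE; apply: laurent_mul; exact: laurent_mono. Qed.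

Lemma lsscaleMl c a b : is_laurent a -> is_laurent b ->
  lsmul (lsscale c a) b = lsscale c (lsmul a b).
Proof. by move=> la lb; rewrite !lsscaleE lsmulA //; exact: laurent_mono. Qed.

Lemma lsscaleMr c a b : is_laurent a -> is_laurent b ->
  lsmul a (lsscale c b) = lsscale c (lsmul a b).
Proof.
move=> la lb; rewrite lsmulC ?lsscaleMl ?(lsmulC la lb) //; exact: laurent_scale.
Qed.

Lemma lsscaleDr c a b : lsscale c (lsadd a b) = lsadd (lsscale c a) (lsscale c b).
Proof. by apply: funext => n; rewrite /lsscale /lsadd mulrDr. Qed.

Lemma lsscale0 c : lsscale c (ls0 K) = ls0 K.
Proof. by apply: funext => n; rewrite /lsscale /ls0 mulr0. Qed.

Lemma laurent_order a : is_laurent a -> a <> ls0 K ->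
  exists m, vanish_below a m /\ a m != 0.
Proof.
move=> [m0 h0] nz.
have ex : exists k : nat, a (m0 + k%:Z) != 0.
  apply: contrapT => hn; apply: nz; apply: funext => n; rewrite /ls0.
  have [/h0 //|ge] := ltP n m0; apply/eqP; apply: contrapT => /negP hn'.
  by apply: hn; exists `|n - m0|%N; rewrite (_ : m0 + _ = n) //; lia.
case: (ex_minnP ex) => k hk hmin; exists (m0 + k%:Z); split => // n hn.
have [/h0 //|ge] := ltP n m0; apply/eqP; apply: contraT => hnz.
have := hmin `|n - m0|%N; have -> : m0 + `|n - m0|%N%:Z = n by lia.
by move/(_ hnz); lia.
Qed.

Fixpoint psinv_coefs a (n : nat) : seq K :=
  match n with
  | 0%N => [:: (a 0)^-1]
  | n'.+1 => let s := psinv_coefs a n' in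
     rcons s (- (a 0)^-1 * \sum_(1 <= i < n'.+2) a i%:Z * nth 0 s (n'.+1 - i))
  end.

Lemma size_psinv_coefs a n : size (psinv_coefs a n) = n.+1.
Proof. by elim: n => //= n IH; rewrite size_rcons IH. Qed.

Lemma nth_psinv_coefs a n m j : (j <= n)%N -> (n <= m)%N ->
  nth 0 (psinv_coefs a m) j = nth 0 (psinv_coefs a n) j.
Proof.
move=> jn; elim: m => [|m IH]; first by rewrite leqn0 => /eqP ->.
rewrite leq_eqVlt => /orP [/eqP -> //|]; rewrite ltnS => nm.
by rewrite /= nth_rcons size_psinv_coefs ifT ?IH //; apply: leq_ltn_trans jn _.
Qed.

Definition psinv a : series :=
  fun k => if k < 0 then 0 else nth 0 (psinv_coefs a `|k|) `|k|.

Lemma vanish_below_psinv a : vanish_below (psinv a) 0.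
Proof. by move=> n hn; rewrite /psinv hn. Qed.

Lemma psinvS a (n : nat) : psinv a n.+1%:Z =
  - (a 0)^-1 * \sum_(1 <= i < n.+2) a i%:Z * psinv a (n.+1%:Z - i%:Z).
Proof.
rewrite /psinv /= nth_rcons size_psinv_coefs ltnn eqxx; congr (_ * _).
rewrite !big_nat; apply: eq_bigr => i /andP [i1 i2]; congr (_ * _).
rewrite ifF; last by apply/negbTE; rewrite -leNgt; lia.
have -> : `|n.+1%:Z - i%:Z|%N = (n.+1 - i)%N by lia.
by rewrite (@nth_psinv_coefs a (n.+1 - i)%N n) //; lia.
Qed.

Lemma psinvP a : vanish_below a 0 -> a 0 != 0 -> lsmul a (psinv a) = ls1.
Proof.
move=> ha a0; apply: funext => n; rewrite /ls1 /lsmono.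
have [nneg|npos] := ltP n 0.
  rewrite (vanish_below_mul ha (@vanish_below_psinv a)) ?add0r //.
  by rewrite ifF //; apply/negbTE; rewrite ltr0_neq0.
have [k ->] : exists k : nat, n = k%:Z by exists `|n|%N; lia.
case: k => [|k].
  by have := lsmul_lead ha (@vanish_below_psinv a); rewrite add0r => ->; rewrite mulfV.
rewrite (@lsmul_windowE _ _ 0 0 _ 0 k.+2) //; last 2 first.
- exact: vanish_below_psinv.
- by lia.
rewrite /window big_map -/(index_iota 0 k.+2) big_ltn //= add0r subr0.
by rewrite psinvS mulrA mulrN mulfV // mulN1r big_add1 /= addNr.
Qed.

Lemma laurent_inv a m : vanish_below a m -> a m != 0 ->
  exists a', vanish_below a' (- m) /\ lsmul a a' = ls1.
Proof.
move=> ha am; pose u : series := fun n => a (n + m).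
have hu : vanish_below u 0 by move=> n hn; rewrite /u ha //; lia.
have u0 : u 0 != 0 by rewrite /u add0r.
have lu : is_laurent u by exists 0.
have lv : is_laurent (psinv u) by exists 0; exact: vanish_below_psinv.
exists (lsmul (lsmono 1 (- m)) (psinv u)); split.
  by have := vanish_below_mul (@vanish_below_mono 1 (- m)) (@vanish_below_psinv u); rewrite addr0.
have -> : a = lsmul (lsmono 1 m) u.
  by apply: funext => n; rewrite lsmul_monol mul1r /u subrK.
rewrite (lsmulACA (laurent_mono _ _) lu (laurent_mono _ _) lv) psinvP //.
by rewrite lsmono1M subrr lsmulr1 //; exact: laurent_mono.
Qed.

Definition lshead (j : int) a : series := fun k => if k < j then a k else 0.
Definition lstail (j : int) a : series := fun k => if k < j then 0 else a k.

Lemma lshead_add_tail j a : lsadd (lshead j a) (lstail j a) = a.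
Proof. by apply: funext => k; rewrite /lsadd /lshead /lstail; case: ifP; rewrite ?addr0 ?add0r. Qed.

Lemma lshead0 a : vanish_below a 0 -> lshead 0 a = ls0 K.
Proof. by move=> ha; apply: funext => k; rewrite /lshead /ls0; case: ifP => // /ha. Qed.

Lemma lsheadS a (j : nat) :
  lshead j.+1%:Z a = lsadd (lshead j%:Z a) (lsscale (a j%:Z) (lsmono 1 j%:Z)).
Proof.
apply: funext => k; rewrite /lshead /lsadd /lsscale /lsmono.
case: (k =P j%:Z) => [->|kj]; first by rewrite ltxx mulr1 add0r ifT //; lia.
by rewrite mulr0 addr0; congr (if _ then _ else _); apply/idP/idP; lia.
Qed.

Lemma laurent_head j a : is_laurent a -> is_laurent (lshead j a).
Proof. by move=> [m h]; exists m => k hk; rewrite /lshead h //; case: ifP. Qed.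

Lemma laurent_tail j a : is_laurent (lstail j a).
Proof. by exists j => k hk; rewrite /lstail hk. Qed.

Fixpoint lsexp a (n : nat) : series :=
  if n is n'.+1 then lsmul (lsexp a n') a else ls1.

Lemma laurent_exp a n : is_laurent a -> is_laurent (lsexp a n).
Proof. by move=> la; elim: n => [|n IH] /=; [exact: laurent_mono | exact: laurent_mul]. Qed.

Lemma lsexp_inv a a' n : is_laurent a -> is_laurent a' -> lsmul a a' = ls1 ->
  lsmul (lsexp a n) (lsexp a' n) = ls1.
Proof.
move=> la la' e; elim: n => [|n IH] /=; first exact: lsmul1.
by rewrite (lsmulACA (laurent_exp n la) la (laurent_exp n la') la') IH e lsmul1.
Qed.

Definition coef_window (lo : int) (N : nat) a : 'rV[K]_N := \row_(k < N) a (lo + k%:Z).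

Definition dual_series (e lo : int) (N : nat) (y : nat -> K) : series :=
  fun n => if lo <= e - n < lo + N%:Z then y (absz (e - n - lo)%R) else 0.

Lemma laurent_dual_series (e lo : int) N y : is_laurent (dual_series e lo N y).
Proof.
exists (e - lo - N%:Z) => n hn; rewrite /dual_series ifF //.
by apply/negbTE; rewrite negb_and -!ltNge -leNgt; apply/orP; right; lia.
Qed.

Lemma lsmul_dual_series a (e lo : int) N y : vanish_below a lo ->
  lsmul a (dual_series e lo N y) e = \sum_(k < N) coef_window lo N a 0 k * y k.
Proof.
move=> ha; rewrite (@lsmul_seqE _ _ _ (window lo N)) ?window_uniq //; last first.
  move=> i ai; rewrite /dual_series; case: ifP => [/andP [h1 h2] _|]; last by rewrite eqxx.
  by rewrite mem_window; have := vanish_below_supp ha ai; lia.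
rewrite /window big_map -(subn0 N) -/(index_iota 0 N) big_mkord subn0.
apply: eq_bigr => k _.
rewrite mxE /dual_series ifT; last by have := ltn_ord k; lia.
by have -> : `|(e - (e - (lo + k%:Z)) - lo)%R|%N = k by lia.
Qed.

Section IdealProduct.
Variables A B : set series.

Lemma prodI_ind (P : set series) : P (ls0 K) ->
  (forall u v, P u -> P v -> P (lsadd u v)) ->
  (forall p q, A p -> B q -> P (lsmul p q)) ->
  forall u, prodI A B u -> P u.
Proof.
move=> P0 PD PM u [s [hs ->]]; elim: s hs => [|[p q] s IH] //= [[Ap Bq] hs].
by apply: PD; [exact: PM | exact: IH].
Qed.

Lemma prodI0 : prodI A B (ls0 K).
Proof. by exists [::]. Qed.

Lemma prodI_mul p q : A p -> B q -> prodI A B (lsmul p q).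
Proof. by move=> Ap Bq; exists [:: (p, q)]; rewrite /= lsadd0r. Qed.

Lemma prodI_add u v : prodI A B u -> prodI A B v -> prodI A B (lsadd u v).
Proof.
move=> [s [hs ->]] [t [ht ->]]; exists (s ++ t); split.
  by elim: s hs => [|pq s IH] //= [h1 h2]; split => //; exact: IH.
by elim: s {hs} => [|pq s IH] /=; rewrite ?lsadd0l // -IH lsaddA.
Qed.

End IdealProduct.

End LaurentSeries.

Section LinearSeparation.
Variables (K : fieldType) (N : nat) (W : set 'rV[K]_N).
Hypotheses (W0 : W 0) (WD : forall u v, W u -> W v -> W (u + v))
  (WZ : forall c u, W u -> W (c *: u)).

Lemma subspace_row_basis : exists m (A : 'M[K]_(m, N)),
  (forall i, W (row i A)) /\ forall u, W u -> (u <= A)%MS.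
Proof.
pose P r := `[< exists m (A : 'M[K]_(m, N)), (forall i, W (row i A)) /\ \rank A = r >].
have exP : exists r, P r.
  by exists 0%N; apply/asboolP; exists 0%N, 0; split; [case | exact: mxrank0].
have ubP r : P r -> (r <= N)%N.
  by move=> /asboolP [m [A [_ <-]]]; exact: rank_leq_col.
case: (ex_maxnP exP ubP) => r /asboolP [m [A [rowsA rkA]]] rmax.
exists m, A; split => // u Wu; apply: contraT => nuA.
have : P (\rank (col_mx A u)).
  apply/asboolP; exists (m + 1)%N, (col_mx A u); split => // i.
  by rewrite -[i]splitK; case: (split i) => j /=; rewrite ?rowKu ?rowKd ?row_id.
move/rmax; rewrite -(addsmxE A u).1 -rkA => le.
rewrite -(negbTE nuA); apply: submx_trans (addsmxSr A u) _.
have [le1 <-] := mxrank_leqif_sup (addsmxSl A u).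
by rewrite eqn_leq le1 le.
Qed.

Lemma linear_separation v : ~ W v ->
  exists y : nat -> K, (forall u, W u -> \sum_(k < N) u 0 k * y k = 0) /\
    \sum_(k < N) v 0 k * y k != 0.
Proof.
move=> nWv; have [m [A [rowsA subA]]] := subspace_row_basis.
have : ~~ (v <= A)%MS.
  apply/negP => /submxP [D vD]; apply: nWv; rewrite vD mulmx_sum_row.
  by apply: (big_ind W) => // i _; exact: WZ.
rewrite submxE => /eqP nz.
have [j hj] : exists j, (v *m cokermx A) 0 j != 0.
  apply: contrapT => hn; apply: nz; apply/matrixP => i k; rewrite (ord1 i) [RHS]mxE.
  by apply/eqP; apply: contrapT => /negP h; apply: hn; exists k.
pose y (k : nat) := if insub k is Some i then cokermx A i j else 0.
have yE (i : 'I_N) : y i = cokermx A i j by rewrite /y valK.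
exists y; split.
  move=> u /subA; rewrite submxE => /eqP /matrixP /(_ 0 j); rewrite !mxE => e.
  by rewrite -[RHS]e; apply: eq_bigr => k _; rewrite yE.
by move: hj; rewrite mxE; under eq_bigr do rewrite -yE.
Qed.

End LinearSeparation.

Section Semigroup.
Variables (K : fieldType) (H : nat -> Prop) (f : int).
Hypotheses (H0 : H 0%N) (HD : forall a b, H a -> H b -> H (a + b)%N).
Hypotheses (H_proper : exists n, ~ H n) (frobH : is_frobenius H f).
Local Notation series := (series K).
Local Notation R := (@in_kH K H).
Implicit Types (a b d e g x y z : series) (c : K).

Lemma inHZ_add m n : inHZ H m -> inHZ H n -> inHZ H (m + n).
Proof. by move=> [i [-> hi]] [j [-> hj]]; exists (i + j)%N; split => //; apply: HD. Qed.

Lemma inHZ_ge0 n : inHZ H n -> 0 <= n.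
Proof. by move=> [m [-> _]]. Qed.

Lemma inHZ0 : inHZ H 0.
Proof. by exists 0%N. Qed.

Lemma frob_notin : ~ inHZ H f.
Proof. by case: frobH. Qed.

Lemma frob_lt n : f < n -> inHZ H n.
Proof. by case: frobH => _; apply. Qed.

Lemma frob_gt0 : 0 < f.
Proof.
have [n hn] := H_proper; have nf : n%:Z <= f.
  by rewrite leNgt; apply/negP => /frob_lt [m [[<-]]].
rewrite lt_neqAle (le_trans _ nf) // andbT.
by apply/eqP => f0; apply: frob_notin; rewrite -f0; exact: inHZ0.
Qed.

Lemma notin_H1 : ~ H 1%N.
Proof.
move=> H1; apply: frob_notin; exists `|f|%N; split; first by have := frob_gt0; lia.
by elim: `|f|%N => // n IH; rewrite -addn1; apply: HD.
Qed.

Lemma kH_vanish_below x : R x -> vanish_below x 0.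
Proof. by move=> hx n hn; apply/eqP; apply: contraT => /hx /inHZ_ge0; lia. Qed.

Lemma kH_laurent x : R x -> is_laurent x.
Proof. by move=> /kH_vanish_below; exists 0. Qed.

Lemma kH_mul x y : R x -> R y -> R (lsmul x y).
Proof.
move=> hx hy n /lsmul_neq0 [i [xi yi]]; have -> : n = i + (n - i) by lia.
by apply: inHZ_add; [apply: hx | apply: hy].
Qed.

Lemma kH_add x y : R x -> R y -> R (lsadd x y).
Proof.
move=> hx hy n; rewrite /lsadd.
by have [x0|/hx xn _ //] := eqVneq (x n) 0; rewrite x0 add0r; apply: hy.
Qed.

Lemma kH0 : R (ls0 K).
Proof. by move=> n; rewrite /ls0 eqxx. Qed.

Lemma kH_mono c n : inHZ H n -> R (lsmono c n).
Proof. by move=> hn k; rewrite /lsmono; case: (k =P n) => [->|]; rewrite ?eqxx. Qed.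

Lemma kH1 : R (ls1 K).
Proof. exact: kH_mono inHZ0. Qed.

Lemma kH_psinv e : R e -> R (psinv e).
Proof.
move=> he; have key (n : nat) : psinv e n%:Z != 0 -> H n.
  elim/ltn_ind: n => -[// | n] IH; rewrite psinvS mulf_eq0 negb_or => /andP [_].
  apply: contraNP => nHn; rewrite big_nat big1 // => i /andP [i1 i2].
  have [->|/he [_ [[<-] Hi]]] := eqVneq (e i%:Z) 0; first by rewrite mul0r.
  have -> : n.+1%:Z - i%:Z = (n.+1 - i)%N%:Z by lia.
  apply/eqP; rewrite mulf_eq0; apply/orP; right; apply: contraT => /IH Hni.
  case: nHn; have -> : n.+1 = (i + (n.+1 - i))%N by lia.
  by apply: HD Hi (Hni _); lia.
move=> n pn; have [n_neg|n_ge0] := ltP n 0.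
  by move: pn; rewrite vanish_below_psinv // eqxx.
by exists `|n|%N; split; [lia | apply: key; rewrite (_ : `|n|%N%:Z = n) //; lia].
Qed.

Lemma kH_unit e : R e -> e 0 != 0 -> exists e', R e' /\ lsmul e e' = ls1 K.
Proof.
move=> he e0; exists (psinv e); split; first exact: kH_psinv.
exact: psinvP (kH_vanish_below he) e0.
Qed.

Lemma laurent_QR x : is_laurent x -> in_QR H x.
Proof.
move=> [m hm]; split; first by exists m.
pose d := (f + 1 + `|m|%N%:Z); have Hd : inHZ H d by apply: frob_lt; lia.
exists (lsmono 1 d); split; first exact: kH_mono.
split; first exact: lsmono_neq0 (oner_neq0 K).
move=> n; rewrite lsmul_monol mul1r => /(vanish_below_supp hm) le.
by apply: frob_lt; lia.
Qed.

Definition omega0 : set series :=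
  fun z => is_laurent z /\ forall n, z n != 0 -> ~ inHZ H (f - n).

Lemma omega0_vanish_below z : omega0 z -> vanish_below z 0.
Proof. by move=> [_ hz] n hn; apply/eqP; apply: contraT => /hz[]; apply: frob_lt; lia. Qed.

Lemma omega0_mul r z : R r -> omega0 z -> omega0 (lsmul r z).
Proof.
move=> hr [lz hz]; split; first exact: laurent_mul (kH_laurent hr) lz.
move=> n /lsmul_neq0 [i [ri zi]] hin; apply: (hz _ zi).
have -> : f - (n - i) = (f - n) + i by lia.
exact: inHZ_add hin (hr _ ri).
Qed.

Lemma omega0_add z z' : omega0 z -> omega0 z' -> omega0 (lsadd z z').
Proof.
move=> [lz hz] [lz' hz']; split; first exact: laurent_add.
move=> n; rewrite /lsadd.
by have [z0|/hz zn _ //] := eqVneq (z n) 0; rewrite z0 add0r; apply: hz'.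
Qed.

Lemma omega0_0 : omega0 (ls0 K).
Proof. by split; [exact: laurent0 | move=> n; rewrite /ls0 eqxx]. Qed.

Lemma omega0_1 : omega0 (ls1 K).
Proof.
split; first exact: laurent_mono.
move=> n; rewrite /ls1 /lsmono; case: (n =P 0) => [-> _|]; last by rewrite eqxx.
by rewrite subr0; exact: frob_notin.
Qed.

Lemma frac_kH : frac_ideal H R.
Proof.
split; [split; [|split; [|split]] | split].
- by move=> x /kH_laurent; exact: laurent_QR.
- exact: kH0.
- exact: kH_add.
- exact: kH_mul.
- by exists (ls1 K); split; [exact: kH1 | exact: ls1_neq0].
- exists (ls1 K); do 2?split; [exact: kH1 | exact: ls1_neq0 | by move=> x; rewrite lsmul1].
Qed.

Lemma frac_omega0 : frac_ideal H omega0.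
Proof.
have Hf1 : inHZ H (f + 1) by apply: frob_lt; lia.
split; [split; [|split; [|split]] | split].
- by move=> x [lx _]; exact: laurent_QR.
- exact: omega0_0.
- exact: omega0_add.
- exact: omega0_mul.
- by exists (ls1 K); split; [exact: omega0_1 | exact: ls1_neq0].
- exists (lsmono 1 (f + 1)); split; first exact: kH_mono.
  split; first exact: lsmono_neq0 (oner_neq0 K).
  move=> z /omega0_vanish_below hz n; rewrite lsmul_monol mul1r.
  by move=> /(vanish_below_supp hz) le; apply: frob_lt; lia.
Qed.

Section FractionalIdeal.
Variable I : set series.
Hypothesis fI : frac_ideal H I.

Lemma frac_laurent z : I z -> is_laurent z.
Proof. by case: fI => -[IQ _] _ /IQ []. Qed.

Lemma frac0 : I (ls0 K).
Proof. by case: fI => -[_ [I0 _]]. Qed.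

Lemma frac_add z z' : I z -> I z' -> I (lsadd z z').
Proof. by case: fI => -[_ [_ [Iadd _]]] _; exact: Iadd. Qed.

Lemma frac_mul r z : R r -> I z -> I (lsmul r z).
Proof. by case: fI => -[_ [_ [_ Imul]]] _; exact: Imul. Qed.

Lemma frac_scale c z : I z -> I (lsscale c z).
Proof. by rewrite lsscaleE; apply: frac_mul; exact: kH_mono inHZ0. Qed.

Lemma frac_vanish_below : exists m, forall z, I z -> vanish_below z m.
Proof.
have [_ [_ [d [Rd [dnz dI]]]]] := fI.
have [e [he de]] := laurent_order (kH_laurent Rd) dnz.
exists (- e) => z Iz; have [->|znz] := pselect (z = ls0 K); first by move=> n _.
have [mz [hmz zm]] := laurent_order (frac_laurent Iz) znz.
have nz : lsmul d z (e + mz) != 0 by rewrite (lsmul_lead he hmz) mulf_neq0.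
by apply: vanish_belowW hmz _; have := inHZ_ge0 (dI z Iz _ nz); lia.
Qed.

Lemma frac_contains_tail : exists m, forall g, vanish_below g m -> I g.
Proof.
have [_ [[u [Iu unz]] _]] := fI; have lu := frac_laurent Iu.
have [m [hm um]] := laurent_order lu unz.
have [u' [hu' uu']] := laurent_inv hm um.
exists (m + f + 1) => g hg.
have lg : is_laurent g by exists (m + f + 1).
have lu' : is_laurent u' by exists (- m).
have Rr : R (lsmul u' g).
  move=> n /(vanish_below_supp (vanish_below_mul hu' hg)) le; apply: frob_lt; lia.
have := frac_mul Rr Iu.
by rewrite lsmulAC // (lsmulC lu' lu) uu' lsmul1.
Qed.

Lemma frac_coef_window_closed (m lo : int) N x z :
  (forall g, vanish_below g m -> I g) -> m <= lo + N%:Z ->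
  vanish_below x lo -> vanish_below z lo -> I z ->
  coef_window lo N x = coef_window lo N z -> I x.
Proof.
move=> hm mN hx hz Iz e; pose d : series := fun n => x n - z n.
have Id : I d.
  apply: hm; apply: (@vanish_belowW _ _ (lo + N%:Z)) => // n hn.
  have [lt|ge] := ltP n lo; first by rewrite /d hx // hz // subr0.
  have kN : (`|n - lo| < N)%N by lia.
  have := congr1 (fun v : 'rV_N => v 0 (Ordinal kN)) e; rewrite !mxE /=.
  have -> : lo + `|n - lo|%N%:Z = n by lia.
  by rewrite /d => ->; rewrite subrr.
have -> : x = lsadd z d by apply: funext => n; rewrite /lsadd /d addrC subrK.
exact: frac_add.
Qed.

Lemma dual_series_colon lo N (y : nat -> K) : (forall z, I z -> vanish_below z lo) ->
  (forall z, I z -> \sum_(k < N) coef_window lo N z 0 k * y k = 0) ->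
  colon H omega0 I (dual_series f lo N y).
Proof.
move=> hlo hy; have lY := laurent_dual_series f lo N y.
split; first exact: laurent_QR.
move=> z Iz; have lz := frac_laurent Iz.
split; first exact: laurent_mul.
move=> n /eqP zYn [h [fn Hh]]; apply: zYn.
have Iz' : I (lsmul (lsmono 1 h%:Z) z) by apply: frac_mul _ Iz; apply: kH_mono; exists h.
rewrite -(hy _ Iz') -(@lsmul_dual_series _ _ f); last exact: hlo.
rewrite (lsmulC (frac_laurent Iz') lY) (lsmulCA lY (laurent_mono _ _) lz).
by rewrite lsmul_monol mul1r -fn opprB addrC subrK.
Qed.

End FractionalIdeal.

(* A linear form on a window of coefficients that kills [I] but not [x] is
   the coefficient of [t^f] in the product with a [dual_series], which then
   lies in [omega0 : I] but does not multiply [x] into [omega0]. *)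
Lemma omega0_bidual I : frac_ideal H I -> colon H omega0 (colon H omega0 I) = I.
Proof.
move=> fI; apply/seteqP; split => x; last first.
  move=> Ix; split; first by apply: laurent_QR; exact: frac_laurent Ix.
  move=> y [/[dup] Qy [ly _] hy]; rewrite (lsmulC (frac_laurent fI Ix) ly); exact: hy.
move=> [[lx _] hx]; apply: contrapT => nIx.
have [b hb] := frac_vanish_below fI; have [c hc] := frac_contains_tail fI.
have [mx hmx] := lx.
pose lo : int := - (`|b|%N + `|mx|%N + `|c|%N)%:Z; pose N := `|c - lo|%N.
have hxlo : vanish_below x lo by apply: vanish_belowW hmx _; lia.
have hIlo z : I z -> vanish_below z lo by move=> /hb /vanish_belowW; apply; lia.
pose W v := exists2 z, I z & v = coef_window lo N z.
have W0 : W 0 by exists (ls0 K); [exact: frac0 | apply/matrixP => i j; rewrite !mxE].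
have WD u v : W u -> W v -> W (u + v).
  move=> [z Iz ->] [z' Iz' ->]; exists (lsadd z z'); first exact: frac_add.
  by apply/matrixP => i j; rewrite !mxE.
have WZ (s : K) u : W u -> W (s *: u).
  move=> [z Iz ->]; exists (lsscale s z); first exact: frac_scale.
  by apply/matrixP => i j; rewrite !mxE.
have nWx : ~ W (coef_window lo N x).
  move=> [z Iz e]; apply: nIx; apply: (frac_coef_window_closed fI hc _ hxlo (hIlo _ Iz) Iz e).
  by rewrite /N; lia.
have [y [yW yx]] := linear_separation W0 WD WZ nWx.
have YI := dual_series_colon fI hIlo (fun z Iz => yW _ (ex_intro2 _ _ z Iz erefl)).
have /= [_ /(_ f)] := hx _ YI; rewrite subrr; apply; last exact: inHZ0.
by rewrite (@lsmul_dual_series _ _ f _ _ _ hxlo).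
Qed.

Lemma canonical_omega0 : canonical_ideal H omega0.
Proof. split; [exact: frac_omega0 | exact: omega0_bidual]. Qed.

Definition maxideal : set series := fun z => R z /\ z 0 = 0.

Lemma frac_maxideal : frac_ideal H maxideal.
Proof.
have Hf1 : inHZ H (f + 1) by apply: frob_lt; lia.
split; [split; [|split; [|split]] | split].
- by move=> x [/kH_laurent lx _]; exact: laurent_QR.
- by split; [exact: kH0 | by []].
- by move=> x y [hx x0] [hy y0]; split; [exact: kH_add | rewrite /lsadd x0 y0 addr0].
- move=> r z hr [hz z0]; split; first exact: kH_mul.
  by rewrite -[0]addr0 lsmul_lead ?z0 ?mulr0 //; exact: kH_vanish_below.
- exists (lsmono 1 (f + 1)); split; last exact: lsmono_neq0 (oner_neq0 K).
  by split; [exact: kH_mono | rewrite /lsmono ifF //; apply/eqP; have := frob_gt0; lia].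
- exists (ls1 K); do 2?split; [exact: kH1 | exact: ls1_neq0 | by move=> x [hx _]; rewrite lsmul1].
Qed.

Lemma colon_kH w : frac_ideal H w -> colon H w R = w.
Proof.
move=> fw; apply/seteqP; split => x; first by move=> [[lx _] /(_ _ kH1)]; rewrite lsmulr1.
move=> wx; split; first exact: (laurent_QR (frac_laurent fw wx)).
by move=> r hr; rewrite (lsmulC (frac_laurent fw wx) (kH_laurent hr)); exact: frac_mul.
Qed.

Lemma canonical_colon_self w : canonical_ideal H w -> colon H w w = R.
Proof. by move=> [fw hd]; have := hd _ frac_kH; rewrite colon_kH. Qed.

Lemma colon_mul (A B C : set series) x y : (forall z, C z -> is_laurent z) ->
  colon H A B x -> colon H B C y -> colon H A C (lsmul x y).
Proof.
move=> lC [[lx _] hx] [[ly _] hy]; split; first exact/laurent_QR/laurent_mul.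
by move=> z Cz; have lz := lC z Cz; rewrite -lsmulA //; exact: hx (hy _ Cz).
Qed.

Definition omega0_div x : set series := fun a => is_laurent a /\ omega0 (lsmul a x).

(* If every product of [omega0 : w] with [w : omega0] were in the maximal
   ideal, then [w : maxideal] would lie in [w], and dualising would put [1]
   in [maxideal]. *)
Lemma canonical_unit_pairing w : canonical_ideal H w ->
  exists x y, colon H omega0 w x /\ colon H w omega0 y /\ lsmul y x 0 != 0.
Proof.
move=> /[dup] cw [fw hd]; apply: contrapT => hno.
have hm x y : colon H omega0 w x -> colon H w omega0 y -> maxideal (lsmul y x).
  move=> Lx L'y; split.
    by rewrite -(canonical_colon_self cw); apply: colon_mul L'y Lx; exact: frac_laurent.
  by apply/eqP; apply: contraT => nz; case: hno; exists x, y.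
have sub a : colon H w maxideal a -> w a.
  move=> [Qa ha]; rewrite -(omega0_bidual fw); split => // x Lx.
  have [[lx _] _] := Lx; have [la _] := Qa.
  rewrite -(hd _ frac_omega0); split; first exact/laurent_QR/laurent_mul.
  move=> y /[dup] L'y [[ly _] _]; rewrite -lsmulA // (lsmulC lx ly).
  by apply: ha; exact: hm.
have : maxideal (ls1 K).
  rewrite -(hd _ frac_maxideal); split; first exact/laurent_QR/laurent_mono.
  by move=> a /sub; rewrite lsmul1.
by case=> _; rewrite /ls1 /lsmono eqxx; apply/eqP; exact: oner_neq0.
Qed.

Lemma canonical_eq_omega0_div w x y : canonical_ideal H w ->
  colon H omega0 w x -> colon H w omega0 y -> lsmul y x 0 != 0 ->
  w = omega0_div x.
Proof.
move=> /[dup] cw [fw hd] /[dup] Lx [[lx _] hx] /[dup] L'y [[ly _] _] yx0.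
have Ryx : R (lsmul y x).
  by rewrite -(canonical_colon_self cw); apply: colon_mul L'y Lx; exact: frac_laurent.
have [e [Re yxe]] := kH_unit Ryx yx0; have le := kH_laurent Re.
apply/seteqP; split => a.
  by move=> wa; have la := frac_laurent fw wa; split => //; rewrite (lsmulC la lx); exact: hx.
move=> [la ax]; rewrite -(omega0_bidual fw); split; first exact: laurent_QR.
move=> z /[dup] Lz [[lz _] _].
have Rzy : R (lsmul z y).
  by rewrite -(canonical_colon_self canonical_omega0); apply: colon_mul Lz L'y => ? [].
have -> : lsmul a z = lsmul (lsmul (lsmul z y) e) (lsmul a x).
  rewrite (lsmulAC (laurent_mul lz ly) le (laurent_mul la lx)) (lsmulACA lz ly la lx).
  rewrite -lsmulA ?yxe ?lsmulr1 ?(lsmulC la lz) //; exact: laurent_mul.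
exact: omega0_mul (kH_mul Rzy Re) ax.
Qed.

Lemma canonical_omega0_div w : canonical_ideal H w ->
  exists x, is_laurent x /\ x <> ls0 K /\ w = omega0_div x.
Proof.
move=> cw; have [x [y [Lx [L'y yx0]]]] := canonical_unit_pairing cw.
exists x; split; first by case: Lx => -[].
split; last exact: canonical_eq_omega0_div L'y yx0.
by move=> x0; move: yx0; rewrite x0 lsmul0r /ls0 eqxx.
Qed.

Section IdealPowers.
Variable w : set series.
Hypothesis lw : forall a, w a -> is_laurent a.

Lemma powI_laurent n p : powI H w n p -> is_laurent p.
Proof.
elim: n p => [|n IH] p /=; first exact: kH_laurent.
apply: prodI_ind; [exact: laurent0 | by move=> u v; apply: laurent_add |].
by move=> p' q /IH lp /lw lq; exact: laurent_mul.
Qed.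

Lemma powI0 n : powI H w n (ls0 K).
Proof. by case: n => [|n] /=; [exact: kH0 | exact: prodI0]. Qed.

Lemma powI_add n u v : powI H w n u -> powI H w n v -> powI H w n (lsadd u v).
Proof. by case: n => [|n] /=; [exact: kH_add | exact: prodI_add]. Qed.

Lemma powI_scale n c p : powI H w n p -> powI H w n (lsscale c p).
Proof.
elim: n p => [|n IH] p /=.
  by rewrite lsscaleE; apply: kH_mul; exact: kH_mono inHZ0.
move: p; apply: (@prodI_ind _ _ _ (fun u => prodI _ _ (lsscale c u))).
- by rewrite lsscale0; exact: prodI0.
- by move=> u v hu hv; rewrite lsscaleDr; exact: prodI_add.
- move=> p' q hp' hq; rewrite -(lsscaleMl c (powI_laurent hp') (lw hq)).
  by apply: prodI_mul => //; exact: IH.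
Qed.

End IdealPowers.

Section OmegaDiv.
Variables x x' : series.
Hypotheses (lx : is_laurent x) (lx' : is_laurent x') (xx' : lsmul x x' = ls1 K).
Local Notation w := (omega0_div x).

Let lw a : w a -> is_laurent a.
Proof. by case. Qed.

Let x'x : lsmul x' x = ls1 K.
Proof. by rewrite (lsmulC lx' lx). Qed.

Lemma omega0_div_inv g : omega0 g -> w (lsmul x' g).
Proof.
move=> /[dup] og [lg _]; split; first exact: laurent_mul.
by rewrite (lsmulAC lx' lg lx) x'x lsmul1.
Qed.

Lemma powI_vanish_below n p : powI H w n p -> vanish_below (lsmul (lsexp x n) p) 0.
Proof.
have lX m := laurent_exp m lx.
elim: n p => [|n IH] p /=; first by rewrite lsmul1; exact: kH_vanish_below.
move=> hp; suff [] : is_laurent p /\ vanish_below (lsmul (lsmul (lsexp x n) x) p) 0 by [].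
move: p hp; apply: prodI_ind => [|u v [lu hu] [lv hv]|p q hp [lq oq]].
- by split; [exact: laurent0 | rewrite lsmul0r].
- split; first exact: laurent_add.
  by rewrite lsmulDr // => [k hk|]; [rewrite /lsadd hu ?hv ?addr0 | exact: laurent_mul].
- have lp := powI_laurent lw hp; split; first exact: laurent_mul.
  rewrite (lsmulACA (lX n) lx lp lq) (lsmulC lx lq).
  by have := vanish_below_mul (IH p hp) (omega0_vanish_below oq); rewrite add0r.
Qed.

Lemma powI_exp_inv n : powI H w n (lsexp x' n).
Proof.
elim: n => [|n IH] /=; first exact: kH1.
by apply: prodI_mul => //; rewrite -(lsmulr1 lx'); apply: omega0_div_inv omega0_1.
Qed.

Lemma Bw_vanish_below z : Bw H w z -> vanish_below z 0.
Proof.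
move=> [n [[lz _] hz]]; have := powI_vanish_below (hz _ (powI_exp_inv n)).
rewrite (lsmulCA (laurent_exp n lx) lz (laurent_exp n lx')).
by rewrite (lsexp_inv n lx lx' xx') lsmulr1.
Qed.

Hypothesis f1_notin : ~ inHZ H (f - 1).

Lemma omega0_t : omega0 (lsmono 1 1).
Proof.
split; first exact: laurent_mono.
by move=> k; rewrite /lsmono; case: (k =P 1) => [-> _ //|]; rewrite eqxx.
Qed.

Lemma powI_exp_inv_mono n (i : nat) : (i <= n)%N ->
  powI H w n (lsmul (lsexp x' n) (lsmono 1 i%:Z)).
Proof.
have lX m := laurent_exp m lx'; have lt := @laurent_mono K 1.
elim: n i => [|n IH] i; first by rewrite leqn0 => /eqP ->; rewrite lsmul1; exact: kH1.
rewrite leq_eqVlt => /orP [/eqP ->|]; last rewrite ltnS => i_le_n.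
  have -> : lsmul (lsexp x' n.+1) (lsmono 1 n.+1%:Z) =
      lsmul (lsmul (lsexp x' n) (lsmono 1 n%:Z)) (lsmul x' (lsmono 1 1)).
    by rewrite (lsmulACA (lX n) (lt _) lx' (lt _)) lsmono1M; congr (lsmul _ (lsmono 1 _)); lia.
  by apply: prodI_mul; [exact: IH | exact: omega0_div_inv omega0_t].
rewrite /= (lsmulAC (lX n) lx' (lt _)); apply: prodI_mul; first exact: IH.
by rewrite -(lsmulr1 lx'); apply: omega0_div_inv omega0_1.
Qed.

Lemma powI_exp_inv_head n g (j : nat) : vanish_below g 0 -> (j <= n.+1)%N ->
  powI H w n (lsmul (lsexp x' n) (lshead j%:Z g)).
Proof.
move=> hg; have lX := laurent_exp n lx'; have lg : is_laurent g by exists 0.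
elim: j => [_|j IH jn]; first by rewrite lshead0 // lsmul0r; exact: powI0.
have lm := @laurent_mono K 1 j%:Z.
rewrite lsheadS lsmulDr //; [|exact: laurent_head | exact: laurent_scale].
apply: powI_add; first exact: IH (ltnW jn).
by rewrite lsscaleMr //; apply: (powI_scale lw); exact: powI_exp_inv_mono.
Qed.

Lemma powI_of_kt n q : f <= n.+1%:Z -> is_laurent q ->
  vanish_below (lsmul (lsexp x n.+1) q) 0 -> powI H w n.+1 q.
Proof.
move=> fn lq; set g := lsmul _ q => hg.
have lX := laurent_exp n.+1 lx; have lX' := laurent_exp n.+1 lx'.
have -> : q = lsmul (lsexp x' n.+1) g.
  by rewrite /g (lsmulA lX' lX lq) (lsmulC lX' lX) (lsexp_inv _ lx lx' xx') lsmul1.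
have lg : is_laurent g := laurent_mul lX lq.
have lh := laurent_head `|f|.+1%:Z lg; have lt := laurent_tail `|f|.+1%:Z g.
rewrite -(lshead_add_tail `|f|.+1%:Z g) lsmulDr //.
apply: powI_add; first by apply: powI_exp_inv_head => //; have := frob_gt0; lia.
rewrite /= -(lsmulA (laurent_exp n lx') lx' lt).
apply: prodI_mul; first exact: powI_exp_inv.
apply: omega0_div_inv; split; first exact: laurent_tail.
move=> k; rewrite /lstail; case: ifP => [_|/negbT]; first by rewrite eqxx.
by rewrite -leNgt => fk _ /inHZ_ge0; lia.
Qed.

Lemma vanish_below_Bw z : vanish_below z 0 -> Bw H w z.
Proof.
move=> hz; have lz : is_laurent z by exists 0.
have f_pos := frob_gt0; exists `|f|%N; split; first exact: laurent_QR.
have -> : `|f|%N = `|f|.-1.+1 by lia.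
move=> p hp; have lp := powI_laurent lw hp.
apply: powI_of_kt; [lia | exact: laurent_mul |].
rewrite (lsmulCA (laurent_exp _ lx) lz lp).
by have := vanish_below_mul hz (powI_vanish_below hp); rewrite add0r.
Qed.

Lemma bw_omega0_div : bw H w = conductor H.
Proof.
apply/seteqP; split => z [Bz hz]; split.
- exact: Bw_vanish_below.
- by move=> y /vanish_below_Bw; apply: hz.
- exact: vanish_below_Bw.
- by move=> y /Bw_vanish_below; apply: hz.
Qed.

End OmegaDiv.

Definition avoids1 z := forall k, z k != 0 -> 0 <= k /\ k != 1.

Lemma avoids1_mul y z : avoids1 y -> avoids1 z -> avoids1 (lsmul y z).
Proof.
move=> hy hz k /lsmul_neq0 [i [/hy [h1 h2] /hz [h3 h4]]]; split; lia.
Qed.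

Lemma avoids1_add y z : avoids1 y -> avoids1 z -> avoids1 (lsadd y z).
Proof.
move=> hy hz k; rewrite /lsadd.
by have [y0|/hy yk _ //] := eqVneq (y k) 0; rewrite y0 add0r; apply: hz.
Qed.

Lemma kH_avoids1 z : R z -> avoids1 z.
Proof.
move=> hz k /hz [m [-> hm]]; split => //; apply/eqP => -[m1].
by apply: notin_H1; rewrite -m1.
Qed.

Lemma omega0_avoids1 z : inHZ H (f - 1) -> omega0 z -> avoids1 z.
Proof.
move=> f1 oz k zk; split; first exact: vanish_below_supp (omega0_vanish_below oz) zk.
by apply/eqP => k1; case: oz => _ /(_ k zk); rewrite k1.
Qed.

Lemma powI_omega0_avoids1 n z : inHZ H (f - 1) -> powI H omega0 n z -> avoids1 z.
Proof.
move=> f1; elim: n z => [|n IH] z /=; first exact: kH_avoids1.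
apply: prodI_ind => [k|u v|p q /IH hp /(omega0_avoids1 f1) hq]; first by rewrite /ls0 eqxx.
  exact: avoids1_add.
exact: avoids1_mul.
Qed.

Lemma powI_omega0_1 n : powI H omega0 n (ls1 K).
Proof.
elim: n => [|n IH] /=; first exact: kH1.
by rewrite -[ls1 K]lsmul1; apply: prodI_mul => //; exact: omega0_1.
Qed.

Lemma bw_omega0_neq_conductor : inHZ H (f - 1) -> bw H omega0 <> conductor H.
Proof.
move=> f1 e; pose T := lsmono (1 : K) (f - 1).
have lT : is_laurent T := laurent_mono _ _.
have BT : bw H omega0 T.
  split.
    exists 0%N; split; first exact: laurent_QR.
    move=> r hr k; rewrite lsmul_monol mul1r => /hr hk.
    by have := inHZ_add f1 hk; rewrite addrC subrK.
  move=> y [n [[ly _] /(_ _ (powI_omega0_1 n))]]; rewrite lsmulr1 // => hy.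
  move=> k; rewrite lsmul_monol mul1r => /(powI_omega0_avoids1 f1 hy) [y1 y2].
  have [k_eq|k_neq] := eqVneq k (f - 1); first by rewrite k_eq.
  by apply: frob_lt; lia.
have t_kt : in_kt (lsmono (1 : K) 1) by move=> n n0; rewrite /lsmono ifF //; apply/eqP; lia.
rewrite e in BT; case: BT => _ /(_ _ t_kt f); rewrite lsmul_monol mul1r /lsmono.
by rewrite ifT ?oner_eq0; [move/(_ isT); exact: frob_notin | apply/eqP; lia].
Qed.

Lemma quasi_frobenius_below_frob : is_quasi_frobenius H (f - 1) <-> ~ inHZ H (f - 1).
Proof.
split=> [[] //|f1]; split => // h Hh h0; apply: frob_lt.
have h1 : h <> 1%N by move=> h1; apply: notin_H1; rewrite -h1.
lia.
Qed.

End Semigroup.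

Theorem theorem3p1 (K : fieldType) (H : nat -> Prop) (f : int) :
  numerical_semigroup H ->
  (exists n : nat, ~ H n) ->
  is_frobenius H f ->
  (min_canonical_conductor K H <-> is_quasi_frobenius H (f - 1)).
Proof.
move=> [H0 [HD _]] H_proper frobH; rewrite quasi_frobenius_below_frob //; split.
  move=> hmin f1; apply: (bw_omega0_neq_conductor H0 HD H_proper frobH f1).
  exact: hmin _ (canonical_omega0 K H0 HD frobH).
move=> f1 w cw; have [x [lx [x0 ->]]] := canonical_omega0_div H0 HD H_proper frobH cw.
have [m [hm xm]] := laurent_order lx x0; have [x' [hx' xx']] := laurent_inv hm xm.
by apply: bw_omega0_div xx' f1 => //; exists (- m).
Qed.
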